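(* Let $\Bbbk$ be a field of characteristic $0$ and let $J$ be a Jordan dialgebra. If $\widehat J\in\mathrm{HomSJ}$, then $J\in\mathrm{HomDiSJ}$.
   Context: A 0-dialgebra is a vector space $J$ with bilinear $\vdash,\dashv$ satisfying $(x\dashv y)\vdash z=(x\vdash y)\vdash z$, $x\dashv(y\vdash z)=x\dashv(y\dashv z)$; then $\bar J=J/\mathrm{span}\{a\vdash b-a\dashv b\}$ is an ordinary algebra acting on $J$ by $\bar a\cdot x=a\vdash x$, $x\cdot\bar a=x\dashv a$, and $\widehat J=\bar J\oplus J$ is the split null extension with product $(\bar a+m)(\bar b+n)=\bar a\bar b+(a\vdash n+m\dashv b)$. A Jordan dialgebra is a 0-dialgebra satisfying $x_1\vdash x_2=x_2\dashv x_1$ and, for $i=1,\dots,4$, the identity obtained from $J(x_1,x_2,x_3,x_4)=x_1(x_2(x_3x_4))+(x_2(x_1x_3))x_4+x_3(x_2(x_1x_4))-(x_1x_2)(x_3x_4)-(x_1x_3)(x_2x_4)-(x_3x_2)(x_1x_4)$ by replacing each product $uv$ by $u\dashv v$ if $x_i$ occurs in $u$ and by $u\vdash v$ otherwise. An associative dialgebra additionally satisfies $(x\vdash y)\vdash z=x\vdash(y\vdash z)$, $(x\dashv y)\dashv z=x\dashv(y\dashv z)$, $(x\vdash y)\dashv z=x\vdash(y\dashv z)$; $D^{(+)}$ has $a\vdash_+b=\tfrac12(a\vdash b+b\dashv a)$, $a\dashv_+b=\tfrac12(a\dashv b+b\vdash a)$. $\mathrm{HomDiSJ}$ is the class of homomorphic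 images of subdialgebras of such $D^{(+)}$. $\mathrm{HomSJ}$ is the variety of homomorphic images of special Jordan algebras (subalgebras of $A^{(+)}$, product $\tfrac12(ab+ba)$, $A$ associative). *)

From HB Require Import structures.
From mathcomp Require Import all_boot all_order all_algebra.
Set Implicit Arguments. Unset Strict Implicit. Unset Printing Implicit Defensive.
Import GRing.Theory.
Local Open Scope ring_scope.

Section DiDefs.
Variable k : fieldType.

Definition bilinear_op (V : lmodType k) (op : V -> V -> V) : Prop :=
  (forall (a : k) (x y z : V), op (a *: x + y) z = a *: op x z + op y z) /\
  (forall (a : k) (x y z : V), op z (a *: x + y) = a *: op z x + op z y).

(* 0-dialgebra: lv = |- , rv = -| *)
Definition is_0_dialgebra (V : lmodType k) (lv rv : V -> V -> V) : Prop :=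
  [/\ bilinear_op lv, bilinear_op rv,
      (forall x y z : V, lv (rv x y) z = lv (lv x y) z) &
      (forall x y z : V, rv x (lv y z) = rv x (rv y z))].

Definition is_assoc_dialgebra (V : lmodType k) (lv rv : V -> V -> V) : Prop :=
  [/\ is_0_dialgebra lv rv,
      (forall x y z : V, lv (lv x y) z = lv x (lv y z)),
      (forall x y z : V, rv (rv x y) z = rv x (rv y z)) &
      (forall x y z : V, rv (lv x y) z = lv x (rv y z))].

(* formal nonassociative monomials in the variables x_1..x_4 (indexed 0..3) *)
Inductive dterm : Type :=
  | DVar of 'I_4
  | DMul of dterm & dterm.

Fixpoint doccurs (i : 'I_4) (t : dterm) : bool :=
  match t with
  | DVar j => j == i
  | DMul u v => doccurs i u || doccurs i v
  end.

Fixpoint deval (V : lmodType k) (lv rv : V -> V -> V) (x : 'I_4 -> V)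
    (i : 'I_4) (t : dterm) : V :=
  match t with
  | DVar j => x j
  | DMul u v => if doccurs i u then rv (deval lv rv x i u) (deval lv rv x i v)
                else lv (deval lv rv x i u) (deval lv rv x i v)
  end.

Definition X1 : dterm := DVar (@Ordinal 4 0 isT).
Definition X2 : dterm := DVar (@Ordinal 4 1 isT).
Definition X3 : dterm := DVar (@Ordinal 4 2 isT).
Definition X4 : dterm := DVar (@Ordinal 4 3 isT).

(* the identity J(x1,x2,x3,x4), evaluated with distinguished variable x_i *)
Definition Jdi (V : lmodType k) (lv rv : V -> V -> V) (x : 'I_4 -> V)
    (i : 'I_4) : V :=
  let e := deval lv rv x i in
    e (DMul X1 (DMul X2 (DMul X3 X4)))
  + e (DMul (DMul X2 (DMul X1 X3)) X4)
  + e (DMul X3 (DMul X2 (DMul X1 X4)))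
  - e (DMul (DMul X1 X2) (DMul X3 X4))
  - e (DMul (DMul X1 X3) (DMul X2 X4))
  - e (DMul (DMul X3 X2) (DMul X1 X4)).

Definition is_jordan_dialgebra (V : lmodType k) (lv rv : V -> V -> V) : Prop :=
  [/\ is_0_dialgebra lv rv,
      (forall x1 x2 : V, lv x1 x2 = rv x2 x1) &
      (forall (x : 'I_4 -> V) (i : 'I_4), Jdi lv rv x i = 0)].

Definition dplus_l (V : lmodType k) (lv rv : V -> V -> V) (a b : V) : V :=
  (2 : k)^-1 *: (lv a b + rv b a).
Definition dplus_r (V : lmodType k) (lv rv : V -> V -> V) (a b : V) : V :=
  (2 : k)^-1 *: (rv a b + lv b a).

Definition subspace (V : lmodType k) (S : V -> Prop) : Prop :=
  S 0 /\ (forall (a : k) (x y : V), S x -> S y -> S (a *: x + y)).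

Definition HomDiSJ (J : lmodType k) (lv rv : J -> J -> J) : Prop :=
  exists (D : lmodType k) (dl dr : D -> D -> D) (S : D -> Prop) (f : D -> J),
  is_assoc_dialgebra dl dr /\
  subspace S /\
  (forall x y, S x -> S y -> S (dplus_l dl dr x y)) /\
  (forall x y, S x -> S y -> S (dplus_r dl dr x y)) /\
  (forall (a : k) x y, S x -> S y -> f (a *: x + y) = a *: f x + f y) /\
  (forall x y, S x -> S y -> f (dplus_l dl dr x y) = lv (f x) (f y)) /\
  (forall x y, S x -> S y -> f (dplus_r dl dr x y) = rv (f x) (f y)) /\
  (forall z : J, exists x, S x /\ f x = z).

Definition jprod (A : algType k) (x y : A) : A := (2 : k)^-1 *: (x * y + y * x).

Definition in_dispan (J : lmodType k) (lv rv : J -> J -> J) (x : J) : Prop :=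
  exists s : seq (k * J * J),
    x = \sum_(t <- s) t.1.1 *: (lv t.1.2 t.2 - rv t.1.2 t.2).

(* The split null extension \hat J = \bar J (+) J is represented by pairs
   (a, m) : J * J standing for \bar a + m, with equality of \hat J being
   hat_eq (congruence modulo span{a|-b - a-|b} in the first component). *)
Definition hat_eq (J : lmodType k) (lv rv : J -> J -> J) (u v : J * J) : Prop :=
  in_dispan lv rv (u.1 - v.1) /\ u.2 = v.2.

Definition hat_add (J : lmodType k) (u v : J * J) : J * J :=
  (u.1 + v.1, u.2 + v.2).
Definition hat_scale (J : lmodType k) (a : k) (u : J * J) : J * J :=
  (a *: u.1, a *: u.2).
(* (\bar a + m)(\bar b + n) = \bar{a |- b} + (a |- n + m -| b) *)
Definition hat_mul (J : lmodType k) (lv rv : J -> J -> J) (u v : J * J) : J * J :=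
  (lv u.1 v.1, lv u.1 v.2 + rv u.2 v.1).

(* \hat J is in HomSJ: it is a homomorphic image of a subalgebra S of A^(+),
   A an associative algebra.  f composed with the projection J*J -> \hat J is
   the (surjective, linear, multiplicative) homomorphism S -> \hat J. *)
Definition hat_in_HomSJ (J : lmodType k) (lv rv : J -> J -> J) : Prop :=
  exists (A : algType k) (S : A -> Prop) (f : A -> J * J),
  [/\ subspace S,
      (forall x y, S x -> S y -> S (jprod x y)),
      (forall (a : k) x y, S x -> S y ->
          hat_eq lv rv (f (a *: x + y)) (hat_add (hat_scale a (f x)) (f y))),
      (forall x y, S x -> S y ->
          hat_eq lv rv (f (jprod x y)) (hat_mul lv rv (f x) (f y))) &
      (forall z : J * J, exists x, S x /\ hat_eq lv rv (f x) z)].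

End DiDefs.

(* Write elements of \hat J as \bar a + m, and let f : S -> \hat J be an
   epimorphism from a subalgebra S of A^(+).  A gives the associative
   dialgebra A (+) A with (s,t) |- (s',t') = (s s', s t') and
   (s,t) -| (s',t') = (s s', t s').
   Take the pairs (s,t) of S (+) S such that f s lies in \bar J, f t lies in J,
   and both represent the same element of J modulo span{a |- b - a -| b}.
   Since the product of \hat J restricted to \bar J x J and J x \bar J is
   a |- n and m -| b, sending (s,t) to f t is a homomorphism of dialgebras
   from this subdialgebra of (A (+) A)^(+) onto J. *)
From mathcomp Require Import all_boot all_order all_algebra.
Set Implicit Arguments. Unset Strict Implicit. Unset Printing Implicit Defensive.
Import GRing.Theory.
Local Open Scope ring_scope.

Section LinCombMap.
Variables (R : pzRingType) (U W : lmodType R) (h : U -> W).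
Hypothesis h_lincomb : forall a x y, h (a *: x + y) = a *: h x + h y.

Lemma lincomb_map0 : h 0 = 0.
Proof.
have := h_lincomb 1 0 0; rewrite !scale1r addr0 => h00.
by apply: (@addIr _ (h 0)); rewrite add0r -h00.
Qed.

Lemma lincomb_mapB x y : h (x - y) = h x - h y.
Proof. by rewrite addrC -scaleN1r h_lincomb scaleN1r addrC. Qed.

End LinCombMap.

Section DiSpan.
Context {k : fieldType} {V : lmodType k} {lv rv : V -> V -> V}.
Hypothesis V0 : is_0_dialgebra lv rv.

Local Notation P := (in_dispan lv rv).

Lemma lv0r z : lv z 0 = 0.
Proof. by have [[_ lvR] _ _ _] := V0; apply: lincomb_map0 (fun a x y => lvR a x y z). Qed.

Lemma rv0l z : rv 0 z = 0.
Proof. by have [_ [rvL _] _ _] := V0; apply: lincomb_map0 (fun a x y => rvL a x y z). Qed.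

Lemma dispan0 : P 0.
Proof. by exists [::]; rewrite big_nil. Qed.

Lemma dispan_lvr a b : P (lv a b - rv a b).
Proof. by exists [:: (1, a, b)]; rewrite big_seq1 scale1r. Qed.

Lemma dispan_lincomb a x y : P x -> P y -> P (a *: x + y).
Proof.
move=> [s ->] [t ->]; exists ([seq (a * u.1.1, u.1.2, u.2) | u <- s] ++ t).
rewrite big_cat big_map scaler_sumr; congr (_ + _).
by apply: eq_bigr => u _; rewrite scalerA.
Qed.

Lemma dispanD x y : P x -> P y -> P (x + y).
Proof. by move=> Px Py; rewrite -[x]scale1r; apply: dispan_lincomb. Qed.

Lemma lv_dispan_l d z : P d -> lv d z = 0.
Proof.
have [[lvL _] _ lv_rv _] := V0; have lvLz := fun a x y => lvL a x y z.
move=> [s ->]; elim: s => [|u s IH]; first by rewrite big_nil (lincomb_map0 lvLz).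
by rewrite big_cons lvL IH (lincomb_mapB lvLz) lv_rv subrr scaler0 addr0.
Qed.

Lemma rv_dispan_r d z : P d -> rv z d = 0.
Proof.
have [_ [_ rvR] _ rv_lv] := V0; have rvRz := fun a x y => rvR a x y z.
move=> [s ->]; elim: s => [|u s IH]; first by rewrite big_nil (lincomb_map0 rvRz).
by rewrite big_cons rvR IH (lincomb_mapB rvRz) rv_lv subrr scaler0 addr0.
Qed.

(* Congruence modulo span{a |- b - a -| b}, the kernel of J -> \bar J. *)
Definition dieqv (x y : V) : Prop := P (x - y).

Local Infix "~=" := dieqv (at level 70).

Lemma dispan_dieqv x y : x ~= y -> P y -> P x.
Proof. by move=> Pxy Py; rewrite -(subrK y x); apply: dispanD. Qed.

Lemma dieqv_refl x : x ~= x.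
Proof. by rewrite /dieqv subrr; apply: dispan0. Qed.

Lemma dieqv_lincomb a {x x' y y'} :
  x ~= x' -> y ~= y' -> a *: x + y ~= a *: x' + y'.
Proof. by move=> Px Py; rewrite /dieqv opprD addrACA -scalerBr; apply: dispan_lincomb. Qed.

Lemma dieqvZ a x y : x ~= y -> a *: x ~= a *: y.
Proof.
move=> Pxy; rewrite -[_ *: x]addr0 -[_ *: y]addr0.
exact: dieqv_lincomb Pxy (dieqv_refl _).
Qed.

Lemma dieqv_sym x y : x ~= y -> y ~= x.
Proof. by move=> /(dieqvZ (-1)); rewrite /dieqv -scalerBr scaleN1r opprB. Qed.

Lemma dieqv_trans y x z : x ~= y -> y ~= z -> x ~= z.
Proof. by move=> Pxy Pyz; rewrite /dieqv -(subrK y x) -addrA; apply: dispanD. Qed.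

Lemma lv_rv_dieqv a b : lv a b ~= rv a b.
Proof. exact: dispan_lvr. Qed.

Lemma lv_dieqv_l x x' z : x ~= x' -> lv x z = lv x' z.
Proof.
have [[lvL _] _ _ _] := V0; move=> /(lv_dispan_l z) lv0.
by apply/eqP; rewrite -subr_eq0 -(lincomb_mapB (fun a x y => lvL a x y z)) lv0.
Qed.

Lemma rv_dieqv_r x x' z : x ~= x' -> rv z x = rv z x'.
Proof.
have [_ [_ rvR] _ _] := V0; move=> /(rv_dispan_r z) rv0.
by apply/eqP; rewrite -subr_eq0 -(lincomb_mapB (fun a x y => rvR a x y z)) rv0.
Qed.

Lemma dispan_lv_r d z : P d -> P (lv z d).
Proof. by move=> Pd; rewrite -[lv z d]subr0 -(rv_dispan_r z Pd); apply: dispan_lvr. Qed.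

Lemma lv_dieqv_r x x' z : x ~= x' -> lv z x ~= lv z x'.
Proof.
have [[_ lvR] _ _ _] := V0.
by move=> /(dispan_lv_r z); rewrite /dieqv (lincomb_mapB (fun a x y => lvR a x y z)).
Qed.

Lemma rv_dieqv_l x x' z : x ~= x' -> rv x z ~= rv x' z.
Proof.
have [_ [rvL _] _ _] := V0.
move=> Pxx'; have := dieqv_sym (lv_rv_dieqv (x - x') z).
by rewrite (lv_dispan_l z Pxx') /dieqv subr0 (lincomb_mapB (fun a x y => rvL a x y z)).
Qed.

End DiSpan.

Section PairDialgebra.
Context {k : fieldType} {A : algType k}.

Definition pair_lv (x y : A * A) : A * A := (x.1 * y.1, x.1 * y.2).
Definition pair_rv (x y : A * A) : A * A := (x.1 * y.1, x.2 * y.1).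

Lemma pair_assoc_dialgebra : is_assoc_dialgebra pair_lv pair_rv.
Proof.
split; try by move=> x y z; rewrite /pair_lv /pair_rv /= !mulrA.
split=> //; split=> a x y z; rewrite /pair_lv /pair_rv;
  by congr (_, _); rewrite /= ?mulrDl ?mulrDr -?scalerAl -?scalerAr.
Qed.

Lemma dplus_l_pair s t s' t' :
  dplus_l pair_lv pair_rv (s, t) (s', t') = (jprod s s', jprod s t').
Proof. by []. Qed.

Lemma dplus_r_pair s t s' t' :
  dplus_r pair_lv pair_rv (s, t) (s', t') = (jprod s s', jprod t s').
Proof. by []. Qed.

End PairDialgebra.

Section HatLift.
Variables (k : fieldType) (J : lmodType k) (lv rv : J -> J -> J).
Hypothesis J0 : is_0_dialgebra lv rv.
Variables (A : algType k) (S : A -> Prop) (f : A -> J * J).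
Hypothesis S_subspace : subspace S.
Hypothesis S_jprod : forall x y, S x -> S y -> S (jprod x y).
Hypothesis f_lincomb : forall a x y, S x -> S y ->
  hat_eq lv rv (f (a *: x + y)) (hat_add (hat_scale a (f x)) (f y)).
Hypothesis f_jprod : forall x y, S x -> S y ->
  hat_eq lv rv (f (jprod x y)) (hat_mul lv rv (f x) (f y)).
Hypothesis f_onto : forall z, exists x, S x /\ hat_eq lv rv (f x) z.

Local Notation P := (in_dispan lv rv).
Local Infix "~=" := (@dieqv _ _ lv rv) (at level 70).

Lemma f1_lincomb a x y : S x -> S y ->
  (f (a *: x + y)).1 ~= a *: (f x).1 + (f y).1.
Proof. by move=> Sx Sy; case: (f_lincomb a Sx Sy). Qed.

Lemma f2_lincomb a x y : S x -> S y ->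
  (f (a *: x + y)).2 = a *: (f x).2 + (f y).2.
Proof. by move=> Sx Sy; case: (f_lincomb a Sx Sy). Qed.

Lemma f1_jprod x y : S x -> S y -> (f (jprod x y)).1 ~= lv (f x).1 (f y).1.
Proof. by move=> Sx Sy; case: (f_jprod Sx Sy). Qed.

Lemma f2_jprod x y : S x -> S y ->
  (f (jprod x y)).2 = lv (f x).1 (f y).2 + rv (f x).2 (f y).1.
Proof. by move=> Sx Sy; case: (f_jprod Sx Sy). Qed.

(* (s, t) lifts a in J: f s represents \bar a in \bar J and f t represents a in J. *)
Definition coherent_pair (x : A * A) : Prop :=
  [/\ S x.1, S x.2, (f x.1).2 = 0, P (f x.2).1 & (f x.1).1 ~= (f x.2).2].

Definition pair_val (x : A * A) : J := (f x.2).2.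

Lemma coherent_pair_subspace : subspace coherent_pair.
Proof.
have [S0 S_lin] := S_subspace.
split.
  have := f1_lincomb (-1) S0 S0; have := f2_lincomb (-1) S0 S0.
  rewrite !scaleN1r oppr0 add0r !addNr => f0_2 f0_1.
  split=> //=; first exact: dispan_dieqv f0_1 dispan0.
  by rewrite f0_2; apply: dieqv_trans f0_1 (dieqv_refl _).
move=> a [s t] [s' t'] [/= Ss St fs2 Pt st] [/= Ss' St' fs'2 Pt' st'].
split=> /=; [exact: S_lin | exact: S_lin | | |].
- by rewrite f2_lincomb // fs2 fs'2 scaler0 addr0.
- by apply: dispan_dieqv (f1_lincomb _ St St') _; apply: dispan_lincomb.
rewrite f2_lincomb //; apply: dieqv_trans (f1_lincomb _ Ss Ss') _.
exact: dieqv_lincomb.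
Qed.

Lemma coherent_pair_dplus_l x y : coherent_pair x -> coherent_pair y ->
  coherent_pair (dplus_l pair_lv pair_rv x y).
Proof.
case: x y => s t [s' t'] [/= Ss St fs2 Pt st] [/= Ss' St' fs'2 Pt' st'].
rewrite dplus_l_pair; split=> /=; [exact: S_jprod | exact: S_jprod | | |].
- by rewrite f2_jprod // fs2 fs'2 (lv0r J0) (rv0l J0) addr0.
- by apply: dispan_dieqv (f1_jprod Ss St') _; apply: (dispan_lv_r J0 _ Pt').
rewrite f2_jprod // fs2 (rv0l J0) addr0.
by apply: dieqv_trans (f1_jprod Ss Ss') (lv_dieqv_r J0 _ st').
Qed.

Lemma coherent_pair_dplus_r x y : coherent_pair x -> coherent_pair y ->
  coherent_pair (dplus_r pair_lv pair_rv x y).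
Proof.
case: x y => s t [s' t'] [/= Ss St fs2 Pt st] [/= Ss' St' fs'2 Pt' st'].
rewrite dplus_r_pair; split=> /=; [exact: S_jprod | exact: S_jprod | | |].
- by rewrite f2_jprod // fs2 fs'2 (lv0r J0) (rv0l J0) addr0.
- apply: dispan_dieqv (f1_jprod St Ss') _.
  by rewrite (lv_dispan_l J0 _ Pt); apply: dispan0.
rewrite f2_jprod // (lv_dispan_l J0 _ Pt) add0r.
apply: dieqv_trans (f1_jprod Ss Ss') _; apply: dieqv_trans (lv_rv_dieqv _ _) _.
exact: (rv_dieqv_l J0 (f s').1 st).
Qed.

Lemma pair_val_lincomb a x y : coherent_pair x -> coherent_pair y ->
  pair_val (a *: x + y) = a *: pair_val x + pair_val y.
Proof. by case: x y => s t [s' t'] [_ St _ _ _] [_ St' _ _ _]; apply: f2_lincomb. Qed.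

Lemma pair_val_dplus_l x y : coherent_pair x -> coherent_pair y ->
  pair_val (dplus_l pair_lv pair_rv x y) = lv (pair_val x) (pair_val y).
Proof.
case: x y => s t [s' t'] [/= Ss _ fs2 _ st] [_ St' _ _ _].
rewrite dplus_l_pair /pair_val /= f2_jprod // fs2 (rv0l J0) addr0.
exact: (lv_dieqv_l J0 (f t').2 st).
Qed.

Lemma pair_val_dplus_r x y : coherent_pair x -> coherent_pair y ->
  pair_val (dplus_r pair_lv pair_rv x y) = rv (pair_val x) (pair_val y).
Proof.
case: x y => s t [s' t'] [_ St _ Pt _] [/= Ss' _ _ _ st'].
rewrite dplus_r_pair /pair_val /= f2_jprod // (lv_dispan_l J0 _ Pt) add0r.
exact: (rv_dieqv_r J0 (f t).2 st').
Qed.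

Lemma pair_val_onto z : exists x, coherent_pair x /\ pair_val x = z.
Proof.
have [s [Ss [fs1 fs2]]] := f_onto (z, 0); have [t [St [ft1 ft2]]] := f_onto (0, z).
exists (s, t); split=> //; split=> //=; first by move: ft1; rewrite subr0.
by rewrite ft2.
Qed.

Lemma hat_lift_HomDiSJ : HomDiSJ lv rv.
Proof.
exists (A * A)%type, pair_lv, pair_rv, coherent_pair, pair_val.
exact: (conj pair_assoc_dialgebra (conj coherent_pair_subspace
  (conj coherent_pair_dplus_l (conj coherent_pair_dplus_r
  (conj pair_val_lincomb (conj pair_val_dplus_l
  (conj pair_val_dplus_r pair_val_onto))))))).
Qed.

End HatLift.

Theorem mainTheorem20 (k : fieldType) (Hchar : [pchar k] =i pred0)
    (J : lmodType k) (lv rv : J -> J -> J) :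
  is_jordan_dialgebra lv rv ->
  hat_in_HomSJ lv rv ->
  HomDiSJ lv rv.
Proof.
move=> [J0 _ _] [A [S [f [S_subspace S_jprod f_lincomb f_jprod f_onto]]]].
exact: (hat_lift_HomDiSJ J0 S_subspace S_jprod f_lincomb f_jprod f_onto).
Qed.
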